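(* Let $I\ge1$, let $u_0,\dots,u_{I-1}\ge 0$, $c_0,\dots,c_{I-1}\ge0$, $u_I,c_I\in\mathbb R$, $k_0,\dots,k_{I-1}>0$, and let $(S_I(t))_{t\ge0}$ be an arbitrary real-valued process. Set $X_I(t)=u_I+c_It-S_I(t)$, $L_I(t)=-\min(\inf_{s\le t}X_I(s),0)$, and recursively for $i=I-1,I-2,\dots,0$: $$Y_i(t)=u_i+c_it-k_iL_{i+1}(t),\qquad L_i(t)=-\min\Big(\inf_{s\le t}Y_i(s),0\Big)\ (i\ge1).$$ Let $\tau_0=\inf\{t\ge0:Y_0(t)<0\}$. Define $$U=\sum_{i=0}^{I}\frac{u_i}{k_i k_{i+1}\cdots k_{I-1}},\qquad C=\sum_{i=0}^{I}\frac{c_i}{k_ik_{i+1}\cdots k_{I-1}}$$ (the empty product for $i=I$ being $1$). Then $\tau_0=\inf\{t\ge0: U+Ct-S_I(t)<0\}$ pathwise; consequently for all $t>0$, $$P(\tau_0<t)=\Psi_I\Big(t;\ \tfrac{u_0}{k_0\cdots k_{I-1}}+\tfrac{u_1}{k_1\cdots k_{I-1}}+\dots+u_I,\ \tfrac{c_0}{k_0\cdots k_{I-1}}+\tfrac{c_1}{k_1\cdots k_{I-1}}+\dots+c_I\Big),$$ where $\Psi_I(t;u,c)=P(\inf\{s\ge0:u+cs-S_I(s)<0\}<t)$ is the finite-time ruin probability of the last subsidiary in the chain with initial reserve $u$ and premium rate $c$.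
   Context: Linear (hierarchical) chain of central branches $X_0,\dots,X_{I-1}$, each a deterministic drift $u_i+c_it$ in isolation; branch $i$ bails out branch $i+1$ by minimal regulation, paying proportional cost $k_i$ per unit of bail-out. $Y_i$ is the (unregulated) reserve of branch $i$ after its bail-out payments, $L_i$ its bail-out regulator, and the ruin of the network is the ruin time $\tau_0$ of the top branch $X_0$. *)

From Stdlib Require Import Reals Lra ClassicalEpsilon.
Open Scope R_scope.

(** Extended reals [-oo, +oo], needed because running infima of an arbitrary
    (possibly locally unbounded) path may be -oo, and hitting times of
    never-attained sets are +oo. *)
Inductive ER : Type := Fin (r : R) | PInf | NInf.

Definition Eneg (e : ER) : ER :=
  match e with Fin r => Fin (- r) | PInf => NInf | NInf => PInf end.

Definition Emin (a b : ER) : ER :=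
  match a, b with
  | NInf, _ => NInf
  | _, NInf => NInf
  | PInf, b => b
  | a, PInf => a
  | Fin x, Fin y => Fin (Rmin x y)
  end.

Definition Esup (P : ER -> Prop) : ER :=
  match excluded_middle_informative (P PInf) with
  | left _ => PInf
  | right _ =>
    match excluded_middle_informative (exists r, P (Fin r)) with
    | right _ => NInf
    | left ne =>
      match excluded_middle_informative (bound (fun r => P (Fin r))) with
      | left b => Fin (proj1_sig (completeness (fun r => P (Fin r)) b ne))
      | right _ => PInf
      end
    end
  end.

Definition Einf (P : ER -> Prop) : ER := Eneg (Esup (fun e => P (Eneg e))).

Definition Eltr (e : ER) (r : R) : Prop :=
  match e with Fin x => x < r | NInf => True | PInf => False end.

Definition Eneg_strict (e : ER) : Prop := Eltr e 0.

Definition regulator (Y : R -> ER) (t : R) : ER :=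
  Eneg (Emin (Einf (fun e => exists s, 0 <= s <= t /\ e = Y s)) (Fin 0)).

Definition Esubk (a k : R) (L : ER) : ER :=
  match L with Fin l => Fin (a - k * l) | PInf => NInf | NInf => PInf end.

(** The chain, indexed downward: [Ydown I u c k SI n] is Y_{I-n}
    (with Y_I := X_I = u_I + c_I t - S_I(t)), and
    Y_{i}(t) = u_i + c_i t - k_i L_{i+1}(t), L_{i+1} = regulator Y_{i+1}. *)
Fixpoint Ydown (I : nat) (u c k : nat -> R) (SI : R -> R) (n : nat) : R -> ER :=
  match n with
  | O => fun t => Fin (u I + c I * t - SI t)
  | S n' => fun t =>
      Esubk (u (I - n)%nat + c (I - n)%nat * t) (k (I - n)%nat)
            (regulator (Ydown I u c k SI n') t)
  end.

Definition Ychain (I : nat) (u c k : nat -> R) (SI : R -> R) (i : nat) : R -> ER :=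
  Ydown I u c k SI (I - i).

Definition ruin_time (Y : R -> ER) : ER :=
  Einf (fun e => exists t, e = Fin t /\ 0 <= t /\ Eneg_strict (Y t)).

Definition ruin_time_R (f : R -> R) : ER := ruin_time (fun t => Fin (f t)).

Fixpoint prod_range (k : nat -> R) (i n : nat) : R :=
  match n with
  | O => 1
  | S n' => k i * prod_range k (S i) n'
  end.

Definition weighted_sum (I : nat) (a k : nat -> R) : R :=
  sum_f_R0 (fun i => a i / prod_range k i (I - i)) I.

(* Induction down the chain, carrying a nondecreasing barrier a + b t with a, b >= 0.
   Branch i falls below -(a + b t) at time t exactly when, at some s <= t,
   branch i+1 falls below -((u_i + a) + (c_i + b) t) / k_i; since the barrier is
   nondecreasing, the same happens at time s itself, so the running minimum hidden
   in the regulator does not move the first-passage time.  Each step rescales the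
   barrier by 1/k_i and adds u_i, c_i, and at the bottom of the chain the barrier
   has become the affine function with coefficients U and C. *)

From Stdlib Require Import Reals.
From Stdlib Require Import Lra Lia Classical ClassicalEpsilon FunctionalExtensionality.
Open Scope R_scope.

Definition Egtr (e : ER) (x : R) : Prop :=
  match e with Fin l => x < l | PInf => True | NInf => False end.

Lemma Egtr_Eneg e y : Egtr e (- y) <-> Eltr (Eneg e) y.
Proof. destruct e; simpl; split; intros; auto; lra. Qed.

Lemma EnegK e : Eneg (Eneg e) = e.
Proof. destruct e; simpl; auto. now rewrite Ropp_involutive. Qed.

Lemma Eltr_le e r r' : Eltr e r -> r <= r' -> Eltr e r'.
Proof. destruct e; simpl; auto; lra. Qed.

Lemma Esup_gt (Q : ER -> Prop) z : Egtr (Esup Q) z <-> exists e, Q e /\ Egtr e z.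
Proof.
  unfold Esup.
  destruct (excluded_middle_informative (Q PInf)) as [QPInf|QPInf].
  { simpl; split; [intros _; exists PInf; simpl; auto | auto]. }
  destruct (excluded_middle_informative (exists r, Q (Fin r))) as [ne|empty].
  - assert (no_member_above : ~ (exists e, Q e /\ Egtr e z) ->
                              is_upper_bound (fun r => Q (Fin r)) z).
    { intros hn r hr. destruct (Rle_dec r z); auto. exfalso; apply hn.
      exists (Fin r); simpl; split; auto; lra. }
    destruct (excluded_middle_informative (bound (fun r => Q (Fin r)))) as [b|unb].
    + destruct (completeness (fun r => Q (Fin r)) b ne) as [l [Hub Hl]]; simpl.
      split.
      * intro hz. apply NNPP; intro hn. specialize (Hl z (no_member_above hn)). lra.
      * intros [[r| |] [he hg]]; simpl in hg; try contradiction.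
        apply Hub in he. lra.
    + simpl. split; auto. intros _. apply NNPP; intro hn.
      apply unb. exists z. exact (no_member_above hn).
  - simpl. split; [tauto|]. intros [[r| |] [he hg]]; simpl in hg; try contradiction.
    apply empty; eauto.
Qed.

Lemma Einf_lt (P : ER -> Prop) y : Eltr (Einf P) y <-> exists e, P e /\ Eltr e y.
Proof.
  unfold Einf. rewrite <- Egtr_Eneg, Esup_gt. split.
  - intros [e [he hg]]. exists (Eneg e). split; auto. now apply Egtr_Eneg.
  - intros [e [he hg]]. exists (Eneg e). rewrite EnegK. split; auto.
    apply Egtr_Eneg. now rewrite EnegK.
Qed.

Lemma Eltr_inj e1 e2 : (forall y, Eltr e1 y <-> Eltr e2 y) -> e1 = e2.
Proof.
  intro H. destruct e1 as [x| |], e2 as [z| |].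
  - destruct (Rtotal_order x z) as [h|[h|h]].
    + destruct (H z) as [H1 _]; simpl in H1; specialize (H1 h); lra.
    + now subst.
    + destruct (H x) as [_ H2]; simpl in H2; specialize (H2 h); lra.
  - destruct (H (x + 1)) as [H1 _]; simpl in H1; exfalso; apply H1; lra.
  - destruct (H x) as [_ H2]; simpl in H2; exfalso; specialize (H2 Logic.I); lra.
  - destruct (H (z + 1)) as [_ H2]; simpl in H2; exfalso; apply H2; lra.
  - reflexivity.
  - destruct (H 0) as [_ H2]; simpl in H2; exfalso; apply H2; exact Logic.I.
  - destruct (H z) as [H1 _]; simpl in H1; specialize (H1 Logic.I); lra.
  - destruct (H 0) as [H1 _]; simpl in H1; exfalso; apply H1; exact Logic.I.
  - reflexivity.
Qed.

Lemma Esubk_lt a K L r : 0 < K ->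
  (Eltr (Esubk a K L) r <-> Egtr L ((a - r) / K)).
Proof.
  intro HK. destruct L as [l| |]; simpl; try tauto.
  assert (Hq : a - r = K * ((a - r) / K)) by (field; lra).
  set (q := (a - r) / K) in *. split; intro; nra.
Qed.

Lemma regulator_gt Y t x : 0 <= x ->
  (Egtr (regulator Y t) x <-> exists s, 0 <= s <= t /\ Eltr (Y s) (- x)).
Proof.
  intro Hx. unfold regulator.
  rewrite <- (Ropp_involutive x) at 1. rewrite Egtr_Eneg, EnegK.
  assert (Emin0_lt : forall e, Eltr (Emin e (Fin 0)) (- x) <-> Eltr e (- x)).
  { intros [z| |]; simpl; try tauto.
    - unfold Rmin; destruct (Rle_dec z 0); split; intro; lra.
    - split; intro; lra. }
  rewrite Emin0_lt, Einf_lt. split.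
  - intros [e [[s [hs ->]] hl]]. eauto.
  - intros [s [hs hl]]. exists (Y s); split; eauto.
Qed.

(* Equal infima, phrased through strict lower cuts so that empty and unbounded-below sets need no case split. *)
Definition same_inf (S1 S2 : R -> Prop) : Prop :=
  forall y, (exists t, S1 t /\ t < y) <-> (exists t, S2 t /\ t < y).

Lemma same_inf_ext (S1 S2 : R -> Prop) : (forall t, S1 t <-> S2 t) -> same_inf S1 S2.
Proof. intros H y; split; intros [t [h1 h2]]; exists t; split; auto; apply H; auto. Qed.

Lemma same_inf_trans S1 S2 S3 : same_inf S1 S2 -> same_inf S2 S3 -> same_inf S1 S3.
Proof. intros H1 H2 y. specialize (H1 y); specialize (H2 y); tauto. Qed.

Lemma Einf_same_inf (S1 S2 : R -> Prop) : same_inf S1 S2 ->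
  Einf (fun e => exists t, e = Fin t /\ S1 t) = Einf (fun e => exists t, e = Fin t /\ S2 t).
Proof.
  intro H. apply Eltr_inj. intro y. rewrite !Einf_lt.
  assert (lift : forall S : R -> Prop, (exists t, S t /\ t < y) <->
            exists e, (exists t, e = Fin t /\ S t) /\ Eltr e y).
  { intro S; split.
    - intros [t [h hl]]. exists (Fin t); split; [exists t|]; auto.
    - intros [e [[t [-> h]] hl]]. exists t; auto. }
  rewrite <- !lift. apply H.
Qed.

Lemma same_inf_running_min (Z : R -> ER) (h : R -> R) :
  (forall s t, 0 <= s <= t -> h s <= h t) ->
  same_inf (fun t => 0 <= t /\ exists s, 0 <= s <= t /\ Eltr (Z s) (- h t))
           (fun t => 0 <= t /\ Eltr (Z t) (- h t)).
Proof.
  intros h_mono y. split.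
  - intros [t [[_ [s [hs hl]]] hty]]. exists s. split; [split|]; try lra.
    eapply Eltr_le; [exact hl|]. specialize (h_mono s t hs). lra.
  - intros [s [[h0 hl] hsy]]. exists s. split; auto. split; auto.
    exists s; split; auto; lra.
Qed.

Fixpoint partial_sum (f : nat -> R) (n : nat) : R :=
  match n with O => 0 | S m => partial_sum f m + f m end.

Lemma sum_f_R0_partial_sum f n : sum_f_R0 f n = partial_sum f (S n).
Proof. induction n; simpl; [lra|]. now rewrite IHn. Qed.

Section Chain.
Variables (I : nat) (u c k : nat -> R).
Hypothesis Hu : forall i, (i < I)%nat -> 0 <= u i.
Hypothesis Hc : forall i, (i < I)%nat -> 0 <= c i.
Hypothesis Hk : forall i, (i < I)%nat -> 0 < k i.
Variable SI : R -> R.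

Definition kprod i := prod_range k i (I - i).

Definition tail_sum (g : nat -> R) i :=
  partial_sum (fun j => g j / kprod j) (S I) - partial_sum (fun j => g j / kprod j) i.

Lemma prod_range_pos n j : (j + n <= I)%nat -> 0 < prod_range k j n.
Proof.
  revert j; induction n; intros j H; simpl; [lra|].
  apply Rmult_lt_0_compat; [apply Hk; lia | apply IHn; lia].
Qed.

Lemma kprodS i : (i < I)%nat -> kprod i = k i * kprod (S i).
Proof.
  intro H. unfold kprod. replace (I - i)%nat with (S (I - S i)) by lia. reflexivity.
Qed.

Lemma tail_sum_shift g i a : (i < I)%nat ->
  (g i + a) / k i / kprod (S i) + tail_sum g (S i) = a / kprod i + tail_sum g i.
Proof.
  intro Hi. assert (Hki := Hk i Hi).
  assert (HP : 0 < kprod (S i)) by (apply prod_range_pos; lia).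
  unfold tail_sum. set (f j := g j / kprod j).
  change (partial_sum f (S i)) with (partial_sum f i + f i).
  unfold f. rewrite (kprodS i Hi). field. lra.
Qed.

Lemma YchainS i t : (i < I)%nat ->
  Ychain I u c k SI i t =
  Esubk (u i + c i * t) (k i) (regulator (Ychain I u c k SI (S i)) t).
Proof.
  intro Hi. unfold Ychain. replace (I - i)%nat with (S (I - S i)) by lia.
  cbn [Ydown]. now replace (I - S (I - S i))%nat with i by lia.
Qed.

Definition below_barrier i a b t :=
  0 <= t /\ Eltr (Ychain I u c k SI i t) (- (a + b * t)).

Lemma below_barrier_step i a b : (i < I)%nat -> 0 <= a -> 0 <= b ->
  same_inf (below_barrier i a b)
           (below_barrier (S i) ((u i + a) / k i) ((c i + b) / k i)).
Proof.
  intros Hi Ha Hb. assert (Hki := Hk i Hi).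
  assert (Hui := Hu i Hi); assert (Hci := Hc i Hi).
  set (h t := (u i + a) / k i + (c i + b) / k i * t).
  assert (Hh : forall t, h t = ((u i + c i * t) - - (a + b * t)) / k i).
  { intro t. unfold h. field. lra. }
  assert (h_slope : 0 <= (c i + b) / k i) by (apply Rle_mult_inv_pos; lra).
  assert (h_nonneg : forall t, 0 <= t -> 0 <= h t).
  { intros t ht. unfold h. assert (0 <= (u i + a) / k i) by (apply Rle_mult_inv_pos; lra).
    nra. }
  apply same_inf_trans with
    (fun t => 0 <= t /\ exists s, 0 <= s <= t /\ Eltr (Ychain I u c k SI (S i) s) (- h t)).
  - apply same_inf_ext. intro t. unfold below_barrier.
    rewrite YchainS, Esubk_lt, <- Hh by assumption.
    split; intros [h0 hl]; split; auto; apply regulator_gt; auto.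
  - apply (same_inf_running_min _ h). intros s t hst. unfold h. nra.
Qed.

Lemma below_barrier_chain i a b : (i <= I)%nat -> 0 <= a -> 0 <= b ->
  same_inf (below_barrier i a b)
           (fun t => 0 <= t /\ a / kprod i + tail_sum u i
                               + (b / kprod i + tail_sum c i) * t - SI t < 0).
Proof.
  remember (I - i)%nat as n eqn:Hn. revert i a b Hn.
  induction n as [|n IH]; intros i a b Hn Hi Ha Hb.
  - replace i with I by lia. apply same_inf_ext. intro t.
    unfold below_barrier, Ychain, tail_sum, kprod. cbn [partial_sum].
    rewrite !Nat.sub_diag. cbn [Ydown prod_range Eltr].
    unfold Rdiv. rewrite Rinv_1.
    split; intros [h1 h2]; split; auto; lra.
  - assert (Hi' : (i < I)%nat) by lia.
    assert (Hki := Hk i Hi'); assert (Hui := Hu i Hi'); assert (Hci := Hc i Hi').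
    eapply same_inf_trans; [apply below_barrier_step; auto|].
    rewrite <- (tail_sum_shift u i a Hi'), <- (tail_sum_shift c i b Hi').
    apply IH; try lia; apply Rle_mult_inv_pos; lra.
Qed.

Lemma ruin_time_Ychain0 :
  ruin_time (Ychain I u c k SI 0) =
  ruin_time_R (fun t => weighted_sum I u k + weighted_sum I c k * t - SI t).
Proof.
  apply Einf_same_inf.
  eapply same_inf_trans; [| eapply same_inf_trans;
    [exact (below_barrier_chain 0 0 0 (Nat.le_0_l I) (Rle_refl 0) (Rle_refl 0))|]].
  - apply same_inf_ext. intro t. unfold below_barrier, Eneg_strict.
    now replace (- (0 + 0 * t)) with 0 by ring.
  - apply same_inf_ext. intro t. unfold Eneg_strict, tail_sum, weighted_sum, kprod.
    rewrite !sum_f_R0_partial_sum. cbn [partial_sum Eltr].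
    unfold Rdiv at 1 3. rewrite !Rmult_0_l.
    split; intros [h1 h2]; split; auto; lra.
Qed.

End Chain.

Theorem mainTheorem3
  (I : nat) (u c k : nat -> R)
  (HI : (1 <= I)%nat)
  (Hu : forall i, (i < I)%nat -> 0 <= u i)
  (Hc : forall i, (i < I)%nat -> 0 <= c i)
  (Hk : forall i, (i < I)%nat -> 0 < k i)
  (Omega : Type) (SI : Omega -> R -> R)
  (Prob : (Omega -> Prop) -> R) :
  (forall w : Omega,
     ruin_time (Ychain I u c k (SI w) 0) =
     ruin_time_R (fun t => weighted_sum I u k + weighted_sum I c k * t - SI w t))
  /\
  (forall t : R, 0 < t ->
     Prob (fun w => Eltr (ruin_time (Ychain I u c k (SI w) 0)) t) =
     (fun (t0 uu cc : R) =>
        Prob (fun w => Eltr (ruin_time_R (fun s => uu + cc * s - SI w s)) t0))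
       t (weighted_sum I u k) (weighted_sum I c k)).
Proof.
  assert (pathwise := fun w => ruin_time_Ychain0 I u c k Hu Hc Hk (SI w)).
  split; [exact pathwise|].
  intros t _. cbv beta. f_equal. apply functional_extensionality. intro w.
  now rewrite pathwise.
Qed.
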